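(* Let $w\in S_n$ and let the Rothe diagram $D(w)$ have columns $D_1,\ldots,D_n$. Then $w$ is fireworks if and only if, for every $j\in[n]$, $D_{w(j)}\neq\emptyset$ implies $\max(D_{w(j)})=j-1$.
   Context: Permutations are written in one-line notation $w(1)w(2)\cdots w(n)$. The Rothe diagram is $D(w)=\{(i,j)\in[n]^2: i<w^{-1}(j),\ j<w(i)\}$, with column $D_j=\{i:(i,j)\in D(w)\}$. The decreasing runs of $w$ are the maximal consecutive decreasing segments of the one-line notation. A permutation is fireworks if the initial elements of its decreasing runs occur in increasing order (e.g. $267419853$ has runs $2|6|741|9853$ and is fireworks). *)

(* Permutations of [n] are modelled as 'S_n acting on 'I_n,
   i.e. the ground set {0,...,n-1} (0-based shift of [n] = {1,...,n}). *)
From mathcomp Require Import all_boot all_order all_fingroup.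
Set Implicit Arguments. Unset Strict Implicit. Unset Printing Implicit Defensive.
Import GroupScope.

Definition rothe_col (n : nat) (w : 'S_n) (j : 'I_n) : {set 'I_n} :=
  [set i : 'I_n | (i < (w^-1)%g j)%N && (j < w i)%N].

(* Position i is the initial position of a (maximal) decreasing run of the
   one-line notation w(0) w(1) ... w(n-1) iff i is the first position or
   the previous entry is smaller (w(i-1) < w(i)). *)
Definition run_start (n : nat) (w : 'S_n) (i : 'I_n) : bool :=
  (val i == 0%N) || [exists k : 'I_n, (k.+1 == val i) && (w k < w i)%N].

Definition fireworks (n : nat) (w : 'S_n) : bool :=
  [forall i : 'I_n, forall k : 'I_n,
     [&& run_start w i, run_start w k & (i < k)%N] ==> (w i < w k)%N].

From mathcomp Require Import all_boot all_order all_fingroup.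

Set Implicit Arguments.
Unset Strict Implicit.
Unset Printing Implicit Defensive.

(* Column D_{w(j)} consists of the positions i < j with w(i) > w(j).  If j
   does not start a run, then w(j-1) > w(j) puts j-1 in the column, so its
   maximum is j-1; if j starts a run, then j-1 is not in the column, so the
   condition says the column is empty, i.e. w(j) is a left-to-right maximum.
   Fireworks means exactly that every run start is a left-to-right maximum,
   because each entry is dominated by the start of its own run. *)

Lemma bigmax_val_eq_ub (n : nat) (A : {set 'I_n}) (k : 'I_n) :
  A != set0 -> {in A, forall i : 'I_n, i <= k} ->
  (\max_(i in A) val i == k) = (k \in A).
Proof.
move=> /set0Pn[i0 Ai0] A_le_k; apply/eqP/idP => [max_k | Ak].
  have A_gt0 : 0 < #|A| by apply/card_gt0P; exists i0.
  have [i Ai max_i] := eq_bigmax_cond val A_gt0.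
  by rewrite (_ : k = i) //; apply/val_inj; rewrite /= -max_k.
apply/eqP; rewrite eqn_leq (@leq_bigmax_cond _ _ val k Ak) andbT.
exact/bigmax_leqP.
Qed.

Section RotheColumns.

Variables (n : nat) (w : 'S_n).

Lemma mem_rothe_col (j i : 'I_n) :
  (i \in rothe_col w (w j)) = (i < j) && (w j < w i).
Proof. by rewrite inE permK. Qed.

Lemma run_startE (k j : 'I_n) : k.+1 = j -> run_start w j = (w k < w j).
Proof.
move=> kj; rewrite /run_start -[val j]kj /=.
apply/existsP/idP => [[k'] | lt_wkj].
  by rewrite eqSS => /andP[/eqP/val_inj ->].
by exists k; rewrite eqxx.
Qed.

Lemma run_start_before (i : 'I_n) :
  exists2 s : 'I_n, run_start w s & (s <= i) && (w i <= w s).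
Proof.
case: i => m; elim: m => [|m IHm] lt_mn.
  by exists (Ordinal lt_mn); rewrite /= ?leqnn.
have [s start_s /andP[le_sm le_wk_ws]] := IHm (ltnW lt_mn).
set i := Ordinal lt_mn; set k := Ordinal (ltnW lt_mn).
case: (ltnP (w k) (w i)) => [lt_wki | le_wik].
  by exists i; rewrite ?leqnn // (@run_startE k i).
by exists s => //; rewrite (leqW le_sm) (leq_trans le_wik le_wk_ws).
Qed.

Lemma fireworks_rothe_col :
  fireworks w <-> forall j, run_start w j -> rothe_col w (w j) = set0.
Proof.
split=> [/forallP fw j start_j | empty_cols].
  apply/setP => i; rewrite in_set0 mem_rothe_col.
  apply/negP => /andP[lt_ij lt_wji].
  have [s start_s /andP[le_si le_wis]] := run_start_before i.
  have := forallP (fw s) j.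
  rewrite start_s start_j (leq_ltn_trans le_si lt_ij) /= => lt_wsj.
  by have := ltn_trans lt_wji (leq_ltn_trans le_wis lt_wsj); rewrite ltnn.
apply/forallP => i; apply/forallP => k; apply/implyP.
move=> /and3P[start_i start_k lt_ik].
case: ltngtP => // [lt_wki | eq_wik].
  have : i \in rothe_col w (w k) by rewrite mem_rothe_col lt_ik.
  by rewrite empty_cols ?in_set0.
by move: lt_ik; rewrite (perm_inj (val_inj eq_wik)) ltnn.
Qed.

Lemma rothe_col_max_pred (j : 'I_n) :
  (rothe_col w (w j) != set0 ->
     \max_(i in rothe_col w (w j)) val i = (val j).-1) <->
  (run_start w j -> rothe_col w (w j) = set0).
Proof.
case: j => [[|k] lt_jn].
  have -> : rothe_col w (w (Ordinal lt_jn)) = set0.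
    by apply/setP => i; rewrite mem_rothe_col in_set0.
  by split=> //; rewrite eqxx.
set j := Ordinal lt_jn; set k' := Ordinal (ltnW lt_jn).
have col_le_k : {in rothe_col w (w j), forall i : 'I_n, i <= k'}.
  by move=> i; rewrite mem_rothe_col => /andP[].
rewrite (@run_startE k' j) //.
case: ltngtP => [lt_wkj | lt_wjk | eq_wkj].
- split=> [max_k _ | col0 col_ne]; last by rewrite col0 ?eqxx in col_ne.
  apply/eqP; apply: contraT => col_ne; have /eqP := max_k col_ne.
  rewrite (bigmax_val_eq_ub col_ne col_le_k) mem_rothe_col.
  by rewrite (ltnNge (w j)) (ltnW lt_wkj) andbF.
- split=> // _ col_ne; apply/eqP.
  by rewrite (bigmax_val_eq_ub col_ne col_le_k) mem_rothe_col ltnSn lt_wjk.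
- by have /(congr1 val)/n_Sn := perm_inj (val_inj eq_wkj).
Qed.

End RotheColumns.

Theorem proposition3p9 (n : nat) (w : 'S_n) :
  fireworks w <->
  (forall j : 'I_n, rothe_col w (w j) != set0 ->
     (\max_(i in rothe_col w (w j)) val i)%N = (val j).-1).
Proof.
split=> [/fireworks_rothe_col empty_cols j | max_cols].
  exact/rothe_col_max_pred/empty_cols.
by apply/fireworks_rothe_col => j; apply/rothe_col_max_pred/max_cols.
Qed.
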